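(* Let $n\geq 2$ and let $L=(a,b,c)$ be an arbitrary sequence of three positive integers such that $UD_n(L)\neq\emptyset$. Then $\rho_{n,L}>\alpha_n$, where $\alpha_2=1/6$ and $\alpha_n=(n-2)/n$ for $n>2$.
   Context: Let $X$ be a finite alphabet with $n\geq 2$ letters and $X^*$ the set of words over $X$; $|v|$ is the length of a word $v$. A code over $X$ is a finite sequence $C=(v_1,\ldots,v_m)$ of words over $X$ such that every $w\in X^*$ has at most one factorization into code-words: if $w=v_{i_1}\cdots v_{i_l}=v_{j_1}\cdots v_{j_{l'}}$ with $l,l'\geq1$, then $l=l'$ and $i_t=j_t$ for all $t$. (Codes are sequences, not sets.) A code $C=(v_1,\ldots,v_m)$ is a prefix code if for all $i,j$, $v_i$ is a prefix of $v_j$ if and only if $i=j$. For a finite sequence $L=(a_1,\ldots,a_m)$ of positive integers, $UD_n(L)$ is the set of all codes $(v_1,\ldots,v_m)$ over an $n$-letter alphabet with $|v_i|=a_i$ for all $i$, $PR_n(L)\subseteq UD_n(L)$ is the subset of prefix codes, and $\rho_{n,L}=|PR_n(L)|/|UD_n(L)|$ (defined when $UD_n(L)\ne\emptyset$). *)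

From mathcomp Require Import all_boot all_order all_algebra.
From mathcomp Require Import boolp.
Set Implicit Arguments. Unset Strict Implicit. Unset Printing Implicit Defensive.
Import Order.TTheory GRing.Theory Num.Theory.

Definition is_code (T : eqType) (C : seq (seq T)) : Prop :=
  forall s t : seq 'I_(size C), s != [::] -> t != [::] ->
    flatten (map (fun i : 'I_(size C) => nth [::] C i) s) =
    flatten (map (fun i : 'I_(size C) => nth [::] C i) t) -> s = t.

Definition is_prefix_code (T : eqType) (C : seq (seq T)) : Prop :=
  is_code C /\
  forall i j : 'I_(size C), prefix (nth [::] C i) (nth [::] C j) = (i == j).

(* Candidate codes with length sequence L = (a,b,c) over the alphabet 'I_n. *)
Definition words3 (n a b c : nat) : finType :=
  (a.-tuple 'I_n * b.-tuple 'I_n * c.-tuple 'I_n)%type.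

Definition seq_of3 (n a b c : nat) (x : words3 n a b c) : seq (seq 'I_n) :=
  [:: tval x.1.1; tval x.1.2; tval x.2].

Definition UD3 (n a b c : nat) : {set words3 n a b c} :=
  [set x | `[< is_code (seq_of3 x) >] ].

Definition PR3 (n a b c : nat) : {set words3 n a b c} :=
  [set x | `[< is_prefix_code (seq_of3 x) >] ].

Definition rho3 (n a b c : nat) : rat :=
  (#|PR3 n a b c|%:R / #|UD3 n a b c|%:R)%R.

Definition alpha (n : nat) : rat :=
  if n == 2 then (1 / 6)%R else ((n - 2)%:R / n%:R)%R.

From mathcomp Require Import all_boot all_order all_algebra perm.
From mathcomp Require Import boolp zify ring.
Import Order.TTheory GRing.Theory Num.Theory.
Set Implicit Arguments. Unset Strict Implicit.

(* Both counts are invariant under permuting the lengths, because codes and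
   prefix codes are stable under reindexing; so we may assume a <= b <= c.
   Three words sorted by length, none a prefix of a later one, form a prefix
   code; counting such triples gives
     #PR >= (n^a n^b - n^b) (n^c - n^(c-a) - n^(c-b)),
   while #UD <= n^a n^b n^c.  With x = n^a and q = n^(b-a) the ratio of these
   bounds is (1 - 1/x)(1 - 1/x - 1/(qx)), which beats alpha_n except for the
   profiles (1, 1, c) when n >= 3 and (1, 1, c), (1, 2, c) when n = 2.  For
   those, #UD is lowered by exhibiting explicit non-codes (repeated words,
   squares, powers of a letter, words spelled by two one-letter code words).
   The comparison is done in nat as k1 #UD < k2 #PR with alpha_n = k1 / k2 and
   transported to the rationals at the end. *)

Section CodeTheory.
Variable T : eqType.
Implicit Types (u v w x y : seq T) (C D : seq (seq T)).

Lemma prefix_total_of_cat u v x y : u ++ x = v ++ y -> prefix u v || prefix v u.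
Proof.
move=> e; wlog le_uv : u v x y e / size u <= size v.
  move=> hwlog; case: (leqP (size u) (size v)) => [|/ltnW] le; first exact: hwlog e le.
  by rewrite orbC; apply: hwlog (esym e) le.
by rewrite prefixE -(takel_cat y le_uv) -e take_size_cat ?eqxx.
Qed.

(* A family of nonempty words none of which is a prefix of another is a code:
   the first words of two equal factorizations must coincide. *)
Lemma prefix_free_code C :
  (forall i : 'I_(size C), nth [::] C i != [::]) ->
  (forall i j : 'I_(size C), prefix (nth [::] C i) (nth [::] C j) -> i = j) ->
  is_code C.
Proof.
move=> nonempty pfree s; elim: s => [|i s IHs] [|j t] //= _ _ e.
have eij : i = j by case/orP: (prefix_total_of_cat e) => /pfree.
subst j; move/eqP: e; rewrite eqseq_cat // eqxx /= => /eqP e.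
case: s IHs e => [|i' s] IHs; case: t => [|j' t] //= e.
- by move: e; case: (nth [::] C j') (nonempty j').
- by move: e; case: (nth [::] C i') (nonempty i').
- by congr (_ :: _); apply: IHs.
Qed.

Lemma not_code_of_factorization C (k : 'I_(size C)) (s : seq 'I_(size C)) :
  s != [::] -> s != [:: k] :> seq 'I_(size C) ->
  nth [::] C k = flatten [seq nth [::] C i | i : 'I_(size C) <- s] -> ~ is_code C.
Proof.
by move=> s_ne /eqP s_nk e codeC; apply: s_nk; apply: codeC => //=; rewrite cats0 e.
Qed.

Lemma code_reindex C D (g : 'I_(size D) -> 'I_(size C)) :
  injective g -> (forall i : 'I_(size D), nth [::] D i = nth [::] C (g i)) ->
  is_code C -> is_code D.
Proof.
move=> g_inj eDC codeC s t s_ne t_ne e; apply: (inj_map g_inj); apply: codeC.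
- by rewrite -size_eq0 size_map size_eq0.
- by rewrite -size_eq0 size_map size_eq0.
by rewrite -!map_comp; rewrite !(eq_map eDC) in e.
Qed.

Lemma prefix_code_reindex C D (g : 'I_(size D) -> 'I_(size C)) :
  injective g -> (forall i : 'I_(size D), nth [::] D i = nth [::] C (g i)) ->
  is_prefix_code C -> is_prefix_code D.
Proof.
move=> g_inj eDC [codeC pfreeC]; split; first exact: code_reindex g_inj eDC codeC.
by move=> i j; rewrite !eDC pfreeC (inj_eq g_inj).
Qed.

(* The two transpositions of a three-word family, which generate all
   rearrangements of it. *)
Lemma nth_swap12 u v w (i : 'I_3) :
  nth [::] [:: v; u; w] i = nth [::] [:: u; v; w] (tperm ord0 (Ordinal (isT : 1 < 3)) i).
Proof. by rewrite permE; case: i => [[|[|[|i]]] lti]. Qed.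

Lemma nth_swap23 u v w (i : 'I_3) :
  nth [::] [:: u; w; v] i =
  nth [::] [:: u; v; w] (tperm (Ordinal (isT : 1 < 3)) (Ordinal (isT : 2 < 3)) i).
Proof. by rewrite permE; case: i => [[|[|[|i]]] lti]. Qed.

Lemma code_swap12 u v w : is_code [:: u; v; w] -> is_code [:: v; u; w].
Proof. exact: (@code_reindex [:: u; v; w] [:: v; u; w] _ perm_inj (nth_swap12 u v w)). Qed.

Lemma code_swap23 u v w : is_code [:: u; v; w] -> is_code [:: u; w; v].
Proof. exact: (@code_reindex [:: u; v; w] [:: u; w; v] _ perm_inj (nth_swap23 u v w)). Qed.

Lemma prefix_code_swap12 u v w :
  is_prefix_code [:: u; v; w] -> is_prefix_code [:: v; u; w].
Proof.
exact: (@prefix_code_reindex [:: u; v; w] [:: v; u; w] _ perm_inj (nth_swap12 u v w)).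
Qed.

Lemma prefix_code_swap23 u v w :
  is_prefix_code [:: u; v; w] -> is_prefix_code [:: u; w; v].
Proof.
exact: (@prefix_code_reindex [:: u; v; w] [:: u; w; v] _ perm_inj (nth_swap23 u v w)).
Qed.

Lemma prefix_size_eq u v : prefix u v -> size v <= size u -> u = v.
Proof. by rewrite prefixE => /eqP {2}<- le_vu; rewrite take_oversize. Qed.

(* Three nonempty words listed by nondecreasing length form a prefix code as
   soon as no word is a prefix of a later one: a prefix of a word no longer
   than itself is that very word. *)
Lemma sorted_prefix_code u v w :
  0 < size u -> size u <= size v -> size v <= size w ->
  ~~ prefix u v -> ~~ prefix u w -> ~~ prefix v w -> is_prefix_code [:: u; v; w].
Proof.
move=> u0 uv vw nuv nuw nvw.
have backward x y : size x <= size y -> ~~ prefix x y -> ~~ prefix y x.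
  by move=> le; apply: contra => /prefix_size_eq /(_ le) ->; apply: prefix_refl.
have nvu := backward _ _ uv nuv; have nwv := backward _ _ vw nvw.
have nwu := backward _ _ (leq_trans uv vw) nuw.
have pfree (i j : 'I_3) :
    prefix (nth [::] [:: u; v; w] i) (nth [::] [:: u; v; w] j) = (i == j).
  by case: i j => [[|[|[|i]]] ?] [[|[|[|j]]] ?];
    rewrite //= -val_eqE /= ?prefix_refl //; apply/negbTE.
split=> //; apply: prefix_free_code => [|i j]; last by rewrite pfree => /eqP.
case=> [[|[|[|i]]] ?] //=; rewrite -size_eq0 -lt0n //.
  exact: leq_trans u0 uv.
exact: leq_trans u0 (leq_trans uv vw).
Qed.

Lemma repeated_not_code u w : ~ is_code [:: u; u; w].
Proof.
apply: (@not_code_of_factorization [:: u; u; w] (@Ordinal 3 0 isT) [:: @Ordinal 3 1 isT]).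
all: by rewrite //= cats0.
Qed.

Lemma square_not_code u w : ~ is_code [:: u; u ++ u; w].
Proof.
apply: (@not_code_of_factorization [:: u; u ++ u; w] (@Ordinal 3 1 isT)
          [:: @Ordinal 3 0 isT; @Ordinal 3 0 isT]) => //=.
by rewrite cats0.
Qed.

Lemma letter_power_not_code l u k : 0 < k -> ~ is_code [:: [:: l]; u; nseq k l].
Proof.
case: k => // k _.
apply: (@not_code_of_factorization [:: [:: l]; u; nseq k.+1 l] (@Ordinal 3 2 isT)
          (nseq k.+1 (@Ordinal 3 0 isT))) => //=.
by rewrite map_nseq; elim: k => //= k ->.
Qed.

Lemma two_letters_not_code l1 l2 w :
  w != [::] -> all (fun l => (l == l1) || (l == l2)) w -> ~ is_code [:: [:: l1]; [:: l2]; w].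
Proof.
pose letter l : 'I_3 := if l == l1 then @Ordinal 3 0 isT else @Ordinal 3 1 isT.
have spell w' : all (fun l => (l == l1) || (l == l2)) w' ->
    flatten [seq nth [::] [:: [:: l1]; [:: l2]; w] (letter l) | l <- w'] = w'.
  elim: w' => //= l w' IHw' /andP[l_l1l2 /IHw' ->]; rewrite /letter.
  by case: eqP => [-> | /eqP nl1] //; move: l_l1l2; rewrite (negbTE nl1) => /eqP ->.
move=> w_ne w_l1l2.
apply: (@not_code_of_factorization [:: [:: l1]; [:: l2]; w] (@Ordinal 3 2 isT) (map letter w)).
- by rewrite -size_eq0 size_map size_eq0.
- by case: (w) => // l w'; rewrite /= eqseq_cons /letter; case: (l == l1).
by rewrite /= -map_comp spell.
Qed.

End CodeTheory.

Lemma card_le_of_injection (A B : finType) (SA : {set A}) (SB : {set B}) (f : A -> B) :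
  injective f -> {in SA, forall x, f x \in SB} -> #|SA| <= #|SB|.
Proof.
move=> f_inj fSA; rewrite -(card_imset SA f_inj); apply: subset_leq_card.
by apply/subsetP => _ /imsetP[x xSA ->]; apply: fSA.
Qed.

Definition words_with (n : nat) (P : seq (seq 'I_n) -> Prop) (a b c : nat) :
  {set words3 n a b c} :=
  [set x | `[< P (seq_of3 x) >] ].

Definition swap12 n a b c (x : words3 n a b c) : words3 n b a c := (x.1.2, x.1.1, x.2).
Definition swap23 n a b c (x : words3 n a b c) : words3 n a c b := (x.1.1, x.2, x.1.2).

Lemma swap12_inj n a b c : injective (@swap12 n a b c).
Proof. by move=> [[? ?] ?] [[? ?] ?] [-> -> ->]. Qed.

Lemma swap23_inj n a b c : injective (@swap23 n a b c).
Proof. by move=> [[? ?] ?] [[? ?] ?] [-> -> ->]. Qed.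

Lemma card_words_with_swap12 n a b c (P : seq (seq 'I_n) -> Prop) :
  (forall u v w, P [:: u; v; w] -> P [:: v; u; w]) ->
  #|words_with P a b c| = #|words_with P b a c|.
Proof.
move=> Pswap; apply/eqP; rewrite eqn_leq.
by apply/andP; split; apply: card_le_of_injection (@swap12_inj _ _ _ _) _ => x;
  rewrite !inE => /asboolP /Pswap Px; apply/asboolP.
Qed.

Lemma card_words_with_swap23 n a b c (P : seq (seq 'I_n) -> Prop) :
  (forall u v w, P [:: u; v; w] -> P [:: u; w; v]) ->
  #|words_with P a b c| = #|words_with P a c b|.
Proof.
move=> Pswap; apply/eqP; rewrite eqn_leq.
by apply/andP; split; apply: card_le_of_injection (@swap23_inj _ _ _ _) _ => x;
  rewrite !inE => /asboolP /Pswap Px; apply/asboolP.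
Qed.

Lemma card_UD3_swap12 n a b c : #|UD3 n b a c| = #|UD3 n a b c|.
Proof. exact: card_words_with_swap12 (@code_swap12 _). Qed.

Lemma card_UD3_swap23 n a b c : #|UD3 n a c b| = #|UD3 n a b c|.
Proof. exact: card_words_with_swap23 (@code_swap23 _). Qed.

Lemma rho3_swap12 n a b c : rho3 n b a c = rho3 n a b c.
Proof.
by rewrite /rho3 card_UD3_swap12 (card_words_with_swap12 b a c (@prefix_code_swap12 _)).
Qed.

Lemma rho3_swap23 n a b c : rho3 n a c b = rho3 n a b c.
Proof.
by rewrite /rho3 card_UD3_swap23 (card_words_with_swap23 a c b (@prefix_code_swap23 _)).
Qed.

Lemma card_fibered_pairs (T1 T2 : finType) (P : pred T1) (Q : T1 -> pred T2) m :
  (forall y, P y -> m <= #|[set z | Q y z]|) ->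
  #|[set y | P y]| * m <= #|[set x : T1 * T2 | P x.1 && Q x.1 x.2]|.
Proof.
move=> fiber; rewrite -!sum1dep_card -(pair_big_dep P Q (fun _ _ => 1)) big_distrl /=.
by apply: leq_sum => y Py; rewrite mul1n sum1dep_card; apply: fiber.
Qed.

(* A word of length c extending u is determined by its last c - |u| letters. *)
Lemma card_prefix_extensions n c (u : seq 'I_n) :
  #|[set z : c.-tuple 'I_n | prefix u z]| <= n ^ (c - size u).
Proof.
have -> : n ^ (c - size u) = #|{: (c - size u).-tuple 'I_n}| by rewrite card_tuple card_ord.
apply: (@leq_card_in _ _ (fun z : c.-tuple 'I_n => [tuple of drop (size u) z])).
move=> z1 z2; rewrite !inE => /prefixP[w1 e1] /prefixP[w2 e2] /(congr1 val) /=.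
by rewrite e1 e2 !drop_size_cat // => e; apply/val_inj; rewrite /= e1 e2 e.
Qed.

(* A pair of words (u, v) with u a prefix of v is determined by v. *)
Lemma card_prefix_pairs n a b :
  a <= b -> #|[set y : a.-tuple 'I_n * b.-tuple 'I_n | prefix y.1 y.2]| <= n ^ b.
Proof.
move=> le_ab; have -> : n ^ b = #|{: b.-tuple 'I_n}| by rewrite card_tuple card_ord.
apply: (@leq_card_in _ _ (fun y : a.-tuple 'I_n * b.-tuple 'I_n => y.2)).
move=> [u1 v1] [u2 v2]; rewrite !inE /= => pre1 pre2 ev; subst v2; congr (_, _).
move: pre1 pre2; rewrite !prefixE !size_tuple => /eqP e1 /eqP e2.
by apply/val_inj; rewrite /= -e1 -e2.
Qed.

(* Lower bound on prefix codes with sorted lengths a <= b <= c: choose (u, v)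
   with u not a prefix of v (at least n^a n^b - n^b pairs), then w avoiding the
   extensions of u and of v (at least n^c - n^(c-a) - n^(c-b) words). *)
Lemma card_PR3_lower n a b c : 0 < a -> a <= b -> b <= c ->
  (n ^ a * n ^ b - n ^ b) * (n ^ c - n ^ (c - a) - n ^ (c - b)) <= #|PR3 n a b c|.
Proof.
move=> a0 le_ab le_bc.
pose P (y : a.-tuple 'I_n * b.-tuple 'I_n) := ~~ prefix y.1 y.2.
pose Q (y : a.-tuple 'I_n * b.-tuple 'I_n) (z : c.-tuple 'I_n) :=
  ~~ prefix y.1 z && ~~ prefix y.2 z.
have pairs : n ^ a * n ^ b - n ^ b <= #|[set y | P y]|.
  set A := [set y : a.-tuple 'I_n * b.-tuple 'I_n | prefix y.1 y.2].
  have -> : [set y | P y] = ~: A by apply/setP => y; rewrite !inE.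
  have := cardsC A; rewrite card_prod !card_tuple card_ord.
  have := card_prefix_pairs n le_ab; rewrite -/A; lia.
have fiber (y : a.-tuple 'I_n * b.-tuple 'I_n) :
    n ^ c - n ^ (c - a) - n ^ (c - b) <= #|[set z | Q y z]|.
  set E1 := [set z : c.-tuple 'I_n | prefix y.1 z].
  set E2 := [set z : c.-tuple 'I_n | prefix y.2 z].
  have -> : [set z | Q y z] = ~: (E1 :|: E2) by apply/setP => z; rewrite !inE negb_or.
  have := card_prefix_extensions c y.1; have := card_prefix_extensions c y.2.
  rewrite !size_tuple -/E1 -/E2 => E2_le E1_le.
  have := cardsC (E1 :|: E2); have := (leq_card_setU E1 E2).1.
  rewrite card_tuple card_ord; lia.
apply: leq_trans (leq_mul pairs (leqnn _)) _.
apply: leq_trans (card_fibered_pairs (fun y _ => fiber y)) _.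
apply: subset_leq_card; apply/subsetP => -[[u v] w] /[!inE] /andP[/= nuv /andP[nuw nvw]].
by apply/asboolP; apply: sorted_prefix_code; rewrite ?size_tuple.
Qed.

Lemma card_words3 n a b c : #|{: words3 n a b c}| = n ^ a * n ^ b * n ^ c.
Proof. by rewrite !card_prod !card_tuple card_ord. Qed.

Lemma card_UD3_upper n a b c (B : finType) (h : B -> words3 n a b c) :
  injective h -> (forall y, ~ is_code (seq_of3 (h y))) ->
  #|UD3 n a b c| + #|B| <= n ^ a * n ^ b * n ^ c.
Proof.
move=> h_inj h_noncode; rewrite -card_words3 -(cardsC (h @: setT)) card_imset // cardsT.
rewrite addnC leq_add2l; apply/subset_leq_card/subsetP => x /[!inE] /asboolP codex.
by apply/imsetP => -[y _ exy]; apply: (h_noncode y); rewrite -exy.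
Qed.

Lemma card_UD3_11 n c : 2 <= n -> 0 < c -> #|UD3 n 1 1 c| + (n * n ^ c).+1 <= n * n * n ^ c.
Proof.
move=> n2 c0; pose l0 : 'I_n := Ordinal (ltnW n2); pose l1 : 'I_n := Ordinal n2.
pose h (y : option (1.-tuple 'I_n * c.-tuple 'I_n)) : words3 n 1 1 c :=
  if y is Some y then (y.1, y.1, y.2) else ([tuple l0], [tuple l1], nseq_tuple c l0).
have := @card_UD3_upper n 1 1 c _ h; rewrite card_option card_prod !card_tuple card_ord expn1.
apply.
  move=> [[? ?]|] [[? ?]|] //=; first by case=> -> _ ->.
  - by case=> e1 e2 _; move: (etrans (esym e1) e2) => /(congr1 val) /= [].
  - by case=> e1 e2 _; move: (etrans e1 (esym e2)) => /(congr1 val) /= [].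
by move=> [y|] /=; [apply: repeated_not_code | apply: letter_power_not_code].
Qed.

Lemma card_UD3_binary_11 c : 0 < c -> #|UD3 2 1 1 c| = 0.
Proof.
move=> c0; apply/eqP; rewrite cards_eq0; apply/eqP/setP => -[[v1 v2] w] /[!inE].
apply/asboolP; rewrite /seq_of3 /=.
case: v1 v2 => [[|l1 []] //= ?] [[|l2 []] //= ?].
have [<-|ne] := eqVneq l1 l2; first exact: repeated_not_code.
apply: two_letters_not_code; first by rewrite -size_eq0 size_tuple -lt0n.
by apply/allP => l _; move: l l1 l2 ne => [[|[|?]] ?] [[|[|?]] ?] [[|[|?]] ?].
Qed.

Lemma card_UD3_binary_12 c : 0 < c -> #|UD3 2 1 2 c| + (2 * 2 ^ c).+1 <= 2 * 4 * 2 ^ c.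
Proof.
move=> c0; pose l0 : 'I_2 := ord0; pose l1 : 'I_2 := ord_max.
pose h (y : option (1.-tuple 'I_2 * c.-tuple 'I_2)) : words3 2 1 2 c :=
  if y is Some y then (y.1, [tuple of y.1 ++ y.1], y.2)
  else ([tuple l0], [tuple l0; l1], nseq_tuple c l0).
have := @card_UD3_upper 2 1 2 c _ h; rewrite card_option card_prod !card_tuple card_ord.
apply.
  move=> [[? ?]|] [[? ?]|] //=; first by case=> -> _ ->.
  - by case=> -> /= [].
  - by case=> <- /= [].
by move=> [y|] /=; [apply: square_not_code | apply: letter_power_not_code].
Qed.

(* Arithmetic core of the sorted case: with x = y + 1,  #UD <= x (q x) . p (q x)
   and  #PR >= (x (q x) - q x)(p (q x) - p q - p) = y (q y - 1) . p (q x), so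
   k1 #UD < k2 #PR follows from the inequality between the cofactors of p (q x). *)
Lemma ratio_from_cofactors k1 k2 y q p U R : 0 < q -> 0 < p ->
  k1 * (y.+1 * (q * y.+1)) + k2 * y < k2 * (y * (q * y)) ->
  U <= y.+1 * (q * y.+1) * (p * (q * y.+1)) ->
  (y.+1 * (q * y.+1) - q * y.+1) * (p * (q * y.+1) - p * q - p) <= R ->
  k1 * U < k2 * R.
Proof.
move=> q0 p0 gap U_le R_ge.
have e_pairs : y.+1 * (q * y.+1) - q * y.+1 = y * (q * y.+1) by rewrite mulSn addKn.
have e_third : p * (q * y.+1) - p * q - p = p * (q * y - 1).
  by rewrite mulnS mulnDr addKn mulnBr muln1.
rewrite e_pairs e_third in R_ge.
have gap' : k1 * (y.+1 * (q * y.+1)) < k2 * (y * (q * y - 1)) by rewrite !mulnBr !muln1; lia.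
have F0 : 0 < q * y.+1 * p by rewrite !muln_gt0 q0 p0.
apply: leq_ltn_trans (leq_mul (leqnn k1) U_le) _.
apply: leq_trans (leq_mul (leqnn k2) R_ge).
have -> : k1 * (y.+1 * (q * y.+1) * (p * (q * y.+1))) =
          k1 * (y.+1 * (q * y.+1)) * (q * y.+1 * p) by ring.
have -> : k2 * (y * (q * y.+1) * (p * (q * y - 1))) =
          k2 * (y * (q * y - 1)) * (q * y.+1 * p) by ring.
by rewrite ltn_pmul2r.
Qed.

Lemma sorted_ratio_bound n a b c k1 k2 : 0 < n -> 0 < a -> a <= b -> b <= c ->
  let y := (n ^ a).-1 in let q := n ^ (b - a) in
  k1 * (y.+1 * (q * y.+1)) + k2 * y < k2 * (y * (q * y)) ->
  k1 * #|UD3 n a b c| < k2 * #|PR3 n a b c|.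
Proof.
move=> n0 a0 le_ab le_bc y q gap.
have UD_le := max_card (mem (UD3 n a b c)); rewrite card_words3 in UD_le.
have PR_ge := card_PR3_lower n a0 le_ab le_bc.
have e_a : n ^ a = y.+1 by rewrite prednK ?expn_gt0 ?n0.
have e_b : n ^ b = q * y.+1 by rewrite -e_a -expnD subnK.
have e_c : n ^ c = n ^ (c - b) * (q * y.+1) by rewrite -e_b -expnD subnK.
have e_ca : n ^ (c - a) = n ^ (c - b) * q by rewrite -expnD; congr (_ ^ _); lia.
rewrite e_a e_b e_c e_ca in UD_le PR_ge.
by apply: ratio_from_cofactors gap UD_le PR_ge; rewrite expn_gt0 n0.
Qed.

(* Cofactor inequality for n >= 3, valid when q >= n (a < b) or x >= n^2 (a >= 2). *)
Lemma cofactor_gap_large n y q : 3 <= n -> n <= y.+1 -> 1 <= q ->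
  (n <= q) || (n * n <= y.+1) ->
  (n - 2) * (y.+1 * (q * y.+1)) + n * y < n * (y * (q * y)).
Proof.
move=> n3 ny q1 /orP[nq|nny]; have [m em] : exists m, n = m + 3 by exists (n - 3); lia.
- have [s ey] : exists s, y = m + 2 + s by exists (y - (m + 2)); lia.
  have [t eq] : exists t, q = n + t by exists (q - n); lia.
  subst; rewrite (_ : m + 3 - 2 = m + 1); last lia.
  clear; nia.
- have [s ey] : exists s, y = m * m + 6 * m + 8 + s by exists (y - (m * m + 6 * m + 8)); nia.
  have [t eq] : exists t, q = 1 + t by exists (q - 1); lia.
  subst; rewrite (_ : m + 3 - 2 = m + 1); last lia.
  clear; nia.
Qed.

Lemma cofactor_gap_binary y q : 1 <= y -> 1 <= q -> (4 <= q) || (3 <= y) ->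
  1 * (y.+1 * (q * y.+1)) + 6 * y < 6 * (y * (q * y)).
Proof.
move=> y1 q1 /orP[q4|y3].
- have [s ey] : exists s, y = 1 + s by exists (y - 1); lia.
  have [t eq] : exists t, q = 4 + t by exists (q - 4); lia.
  subst; clear; nia.
- have [s ey] : exists s, y = 3 + s by exists (y - 3); lia.
  have [t eq] : exists t, q = 1 + t by exists (q - 1); lia.
  subst; clear; nia.
Qed.

(* The exceptional profile (1, 1, c) for n >= 3, with P = n^(c-1). *)
Lemma ratio_11_arith n P U R : 3 <= n ->
  U + (n * (n * P)).+1 <= n * n * (n * P) -> (n * n - n) * (n * P - P - P) <= R ->
  (n - 2) * U < n * R.
Proof.
move=> n3; have [m ->] : exists m, n = m + 3 by exists (n - 3); lia.
have -> : m + 3 - 2 = m + 1 by lia.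
have -> : (m + 3) * (m + 3) - (m + 3) = (m + 3) * (m + 2) by lia.
have -> : (m + 3) * P - P - P = (m + 1) * P by lia.
move=> U_le R_ge; have U_lt : U < (m + 3) * (m + 3) * (m + 2) * P by lia.
have := leq_mul (leqnn (m + 3)) R_ge.
have : (m + 1) * U < (m + 1) * ((m + 3) * (m + 3) * (m + 2) * P) by rewrite ltn_pmul2l ?addn1.
lia.
Qed.

Lemma ratio_large_alphabet n a b c : 3 <= n -> 0 < a -> a <= b -> b <= c ->
  (n - 2) * #|UD3 n a b c| < n * #|PR3 n a b c|.
Proof.
move=> n3 a0 le_ab le_bc; have n0 : 0 < n by apply: leq_trans n3.
have e_a : ((n ^ a).-1).+1 = n ^ a by rewrite prednK ?expn_gt0 ?n0.
case: (boolP ((a < b) || (1 < a))) => [generic | /norP[/negbTE ab /negbTE a1]].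
  apply: sorted_ratio_bound => //; apply: cofactor_gap_large => //.
  all: rewrite ?e_a ?expn_gt0 ?n0 //.
    by rewrite -{1}(expn1 n) leq_exp2l ?(ltnW n3).
  case/orP: generic => [lt_ab|lt1a]; apply/orP; [left|right].
    by rewrite -{1}(expn1 n) leq_exp2l ?(ltnW n3) // subn_gt0.
  by rewrite mulnn leq_exp2l ?(ltnW n3).
have [a_1 b_1] : a = 1 /\ b = 1 by lia.
subst a b.
have c0 : 0 < c by lia.
have U_le := card_UD3_11 (ltnW n3) c0.
have R_ge := card_PR3_lower n (isT : 0 < 1) (leqnn 1) le_bc.
have e_c : n ^ c = n * n ^ c.-1 by rewrite -expnS prednK.
rewrite e_c subn1 !expn1 in U_le R_ge.
exact: ratio_11_arith n3 U_le R_ge.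
Qed.

Lemma ratio_binary a b c : 0 < a -> a <= b -> b <= c -> 0 < #|UD3 2 a b c| ->
  #|UD3 2 a b c| < 6 * #|PR3 2 a b c|.
Proof.
move=> a0 le_ab le_bc UD0.
have e_a : ((2 ^ a).-1).+1 = 2 ^ a by rewrite prednK ?expn_gt0.
case: (boolP ((1 < a) || (2 < b))) => [generic | /norP[a1 b2]].
  rewrite -[X in X < _]mul1n; apply: sorted_ratio_bound => //.
  apply: cofactor_gap_binary; rewrite ?expn_gt0 //.
    by rewrite -ltnS e_a; apply: (@leq_pexp2l 2 1 a).
  case: (ltnP 1 a) => [lt1a|le_a1]; apply/orP; [right|left].
    by rewrite -ltnS e_a; apply: (@leq_pexp2l 2 2 a).
  by apply: (@leq_pexp2l 2 2 (b - a)); lia.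
have a_1 : a = 1 by lia.
subst a; have [b_1|b_2] : b = 1 \/ b = 2 by lia.
  by subst b; rewrite card_UD3_binary_11 in UD0.
subst b.
have U_le := card_UD3_binary_12 (ltnW le_bc).
have R_ge := card_PR3_lower 2 (isT : 0 < 1) le_ab le_bc.
have [k c_eq] : exists k, c = k + 2 by exists (c - 2); lia.
subst c; have e_c : 2 ^ (k + 2) = 4 * 2 ^ k by rewrite expnD mulnC.
have e_c1 : 2 ^ (k + 2 - 1) = 2 * 2 ^ k by rewrite addn2 subn1 /= expnS.
rewrite e_c e_c1 addnK (_ : 2 ^ 1 * 2 ^ 2 - 2 ^ 2 = 4) // in U_le R_ge.
lia.
Qed.

Lemma frac_lt_frac (k1 k2 U R : nat) : 0 < k2 -> 0 < U -> k1 * U < k2 * R ->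
  (k1%:R / k2%:R < R%:R / U%:R :> rat)%R.
Proof.
move=> k20 U0 lt_kUR.
by rewrite ltr_pdivrMr ?ltr0n // mulrAC ltr_pdivlMr ?ltr0n // -!natrM ltr_nat [R * _]mulnC.
Qed.

Lemma alpha_lt_rho3_sorted n a b c : 2 <= n -> 0 < a -> a <= b -> b <= c ->
  0 < #|UD3 n a b c| -> (alpha n < rho3 n a b c)%R.
Proof.
move=> n2 a0 le_ab le_bc UD0; rewrite /alpha /rho3.
case: eqP => [n_2 | /eqP n_ne2].
  have -> : (1 / 6 : rat)%R = (1%:R / 6%:R)%R by [].
  by apply: frac_lt_frac => //; subst n; rewrite mul1n; apply: ratio_binary.
apply: frac_lt_frac => //; first exact: leq_trans n2.
by apply: ratio_large_alphabet => //; rewrite ltn_neqAle eq_sym n_ne2.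
Qed.

Lemma sorted_triple_ind (P : nat -> nat -> nat -> Prop) :
  (forall a b c, P a b c -> P b a c) -> (forall a b c, P a b c -> P a c b) ->
  (forall a b c, a <= b -> b <= c -> P a b c) -> forall a b c, P a b c.
Proof.
move=> swap12 swap23 sorted a b c.
wlog le_ab : a b c / a <= b.
  by move=> hw; case: (leqP a b) => [|/ltnW] le; [apply: hw | apply: swap12; apply: hw].
case: (leqP b c) => [|lt_cb]; first exact: sorted.
apply: swap23; case: (leqP a c) => [le_ac|lt_ca]; first exact: sorted (ltnW lt_cb).
by apply: swap12; apply: sorted (ltnW lt_ca) _.
Qed.

Theorem theorem4 (n a b c : nat) :
  (2 <= n)%N -> (0 < a)%N -> (0 < b)%N -> (0 < c)%N ->
  UD3 n a b c != set0 ->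
  (alpha n < rho3 n a b c)%R.
Proof.
move=> n2 a0 b0 c0; rewrite -card_gt0; move: a b c a0 b0 c0.
apply: sorted_triple_ind => [a b c | a b c | a b c le_ab le_bc a0 b0 c0].
- by rewrite -card_UD3_swap12 -rho3_swap12 => swapped ? ? ?; apply: swapped.
- by rewrite -card_UD3_swap23 -rho3_swap23 => swapped ? ? ?; apply: swapped.
exact: alpha_lt_rho3_sorted.
Qed.
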